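(* Let $\Bbbk$ be a field of characteristic zero, let $n=2m$ be an even integer and $S=\Bbbk[x_1,\ldots,x_n]$. (1) For $d \geq 5$ and $n\geq 4$, let $I = (x_1^d,\dots, x_n^d, x_1^3x_2^{d-3})$. (2) For $d = 4$ and $n\geq 4$, let $I = (x_1^d,\ldots, x_n^d,x_1 x_2 x_3 x_4)$. (3) For $d = 3$ and $n\geq 6$, let $I = (x_1^d,\ldots, x_n^d,x_1 x_2 x_3)$. Then in all cases, $S/I$ fails the WLP in degree $m(d-1) -1$.
   Context: For a monomial ideal $I$, $A=S/I$ fails the WLP in degree $i$ if the multiplication map $\times(x_1+\cdots+x_n): A_i\to A_{i+1}$ is neither injective nor surjective. *)

From HB Require Import structures.
From mathcomp Require Import all_boot all_algebra.
From mathcomp Require Import mpoly.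
Set Implicit Arguments. Unset Strict Implicit. Unset Printing Implicit Defensive.
Import GRing.Theory.
Local Open Scope ring_scope.

(* The variable x_{i+1} of S = K[x_1,...,x_n] (0-based index i; 0 if i >= n,
   which never happens under the hypotheses of the theorem). *)
Definition var (K : fieldType) (n : nat) (i : nat) : {mpoly K[n]} :=
  if insub i is Some j then 'X_j else 0.

Definition in_ideal (K : fieldType) (n : nat) (gens : seq {mpoly K[n]})
  (f : {mpoly K[n]}) : Prop :=
  exists hs : seq {mpoly K[n]}, size hs = size gens /\
    f = \sum_(k < size gens) hs`_k * gens`_k.

Definition lform (K : fieldType) (n : nat) : {mpoly K[n]} := \sum_(i < n) 'X_i.

(* A = S/I with A_i = S_i / I_i.  The multiplication map x l : A_i -> A_{i+1}. *)
Definition wlp_injective (K : fieldType) (n : nat) (gens : seq {mpoly K[n]})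
  (i : nat) : Prop :=
  forall f : {mpoly K[n]}, f \is i.-homog ->
    in_ideal gens (lform K n * f) -> in_ideal gens f.

Definition wlp_surjective (K : fieldType) (n : nat) (gens : seq {mpoly K[n]})
  (i : nat) : Prop :=
  forall g : {mpoly K[n]}, g \is i.+1.-homog ->
    exists f : {mpoly K[n]}, f \is i.-homog /\
      in_ideal gens (g - lform K n * f).

Definition fails_WLP_in_degree (K : fieldType) (n : nat)
  (gens : seq {mpoly K[n]}) (i : nat) : Prop :=
  ~ wlp_injective gens i /\ ~ wlp_surjective gens i.

Definition powers_plus (K : fieldType) (n d : nat) (extra : {mpoly K[n]})
  : seq {mpoly K[n]} :=
  [seq (var K n i) ^+ d | i <- iota 0 n] ++ [:: extra].

From HB Require Import structures.
From mathcomp Require Import all_boot all_algebra.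
From mathcomp Require Import mpoly.
From mathcomp Require Import ring zify.
Import GRing.Theory.
Set Implicit Arguments. Unset Strict Implicit. Unset Printing Implicit Defensive.
Local Open Scope ring_scope.

(* Write n = b + 2k, with b = 2, 4 or 6 "base" variables and k pairs (x, y).
   For a pair, pair_form d x y = (x^d - (-y)^d) / (x + y) has degree d - 1 and
   (x + y) * pair_form d x y lies in (x^d, y^d).  As l = l_b + sum (x + y),
   multiplying a witness in the base variables by the product P of these forms
   yields a witness in all n variables, of degree raised by k (d - 1).
   - Non-injectivity: take a form a in the base variables with l_b a in I.  Then
     l (a P) is in I, but a P is not: the ring map killing the second variable of
     each pair (and suitable base variables) sends every generator of I into
     (x_1^d, ..., x_n^d), and a P to a polynomial having a monomial with all
     exponents < d.
   - Non-surjectivity (inverse systems): take G in the base variables such that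
     l_b G and e G lie in (x_1^d, ..., x_n^d), e being the extra generator of I.
     Multiplication by G P sends I + l S_i into (x_1^d, ..., x_n^d), but not the
     monomial complementary, in the box [0, d)^n, to a monomial of G P.
   The base witnesses come from binomial expansions when d >= 5, and from
   Vandermonde determinants and one explicit quintic when d = 3, 4. *)

Section Ideals.
Variables (K : fieldType) (n : nat) (gens : seq {mpoly K[n]}).
Implicit Types (p q h : {mpoly K[n]}).
Local Notation I := (in_ideal gens).

Lemma in_ideal0 : I 0.
Proof.
exists (nseq (size gens) 0); rewrite size_nseq; split => //.
by rewrite big1 // => k _; rewrite nth_nseq if_same mul0r.
Qed.

Lemma in_idealD p q : I p -> I q -> I (p + q).
Proof.
move=> [hp [sp ->]] [hq [sq ->]].
exists (mkseq (fun k => hp`_k + hq`_k) (size gens)); rewrite size_mkseq.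
by split=> //; rewrite -big_split; apply: eq_bigr => k _; rewrite nth_mkseq // mulrDl.
Qed.

Lemma in_idealMl h p : I p -> I (h * p).
Proof.
move=> [hp [sp ->]].
exists (mkseq (fun k => h * hp`_k) (size gens)); rewrite size_mkseq.
by split=> //; rewrite mulr_sumr; apply: eq_bigr => k _; rewrite nth_mkseq // mulrA.
Qed.

Lemma in_idealMr h p : I p -> I (p * h).
Proof. by rewrite mulrC; apply: in_idealMl. Qed.

Lemma in_idealN p : I p -> I (- p).
Proof. by rewrite -mulN1r; apply: in_idealMl. Qed.

Lemma in_idealB p q : I p -> I q -> I (p - q).
Proof. by move=> Ip Iq; apply: in_idealD => //; apply: in_idealN. Qed.

Lemma in_idealMn p c : I p -> I (p *+ c).
Proof. by rewrite -mulr_natl; apply: in_idealMl. Qed.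

Lemma in_ideal_sum (J : Type) (r : seq J) (P : pred J) (F : J -> {mpoly K[n]}) :
  (forall j, P j -> I (F j)) -> I (\sum_(j <- r | P j) F j).
Proof. by move=> IF; elim/big_ind: _ => //; [apply: in_ideal0 | apply: in_idealD]. Qed.

Lemma mem_in_ideal g : g \in gens -> I g.
Proof.
move=> g_in; exists (mkseq (fun k => (k == index g gens)%:R) (size gens)).
rewrite size_mkseq; split=> //.
have ig : (index g gens < size gens)%N by rewrite index_mem.
rewrite (bigD1 (Ordinal ig)) //= big1 ?addr0 => [|k /eqP k_neq].
  by rewrite nth_mkseq // eqxx mul1r nth_index.
rewrite nth_mkseq // (_ : _ == _ = false) ?mul0r //.
by apply/negbTE/eqP => k_eq; apply: k_neq; apply: val_inj.
Qed.

End Ideals.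

Section Monomials.
Variables (K : fieldType) (n : nat).
Local Notation var := (var K n).

Definition mnm1n (c : nat) : 'X_{1..n} := [multinom (i == c :> nat) : nat | i < n].

Lemma mnm1nE c (i : 'I_n) : mnm1n c i = (i == c :> nat).
Proof. by rewrite mnmE. Qed.

Lemma mnm1n_ord c (c_lt : (c < n)%N) : mnm1n c = U_(Ordinal c_lt)%MM.
Proof. by apply/mnmP => i; rewrite mnm1nE mnm1E eq_sym. Qed.

Lemma mdeg_mnm1n c : (c < n)%N -> mdeg (mnm1n c) = 1%N.
Proof. by move=> c_lt; rewrite mnm1n_ord mdeg1. Qed.

Lemma var_ord (i : 'I_n) : var i = 'X_i.
Proof. by rewrite /var; case: insubP => [j _ /val_inj -> //|]; rewrite ltn_ord. Qed.

Lemma varE c : (c < n)%N -> var c = 'X_[mnm1n c].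
Proof. by move=> c_lt; rewrite -[c]/(val (Ordinal c_lt)) var_ord mnm1n_ord. Qed.

Lemma var_homog c : (c < n)%N -> var c \is 1.-homog.
Proof. by move=> c_lt; rewrite varE // dhomogX mnm1n_ord; apply/eqP/mdeg1. Qed.

Lemma lformE : lform K n = \sum_(0 <= i < n) var i.
Proof. by rewrite /lform big_mkord; apply: eq_bigr => i _; rewrite var_ord. Qed.

End Monomials.

Section Box.
Variables (K : fieldType) (n d : nat).
Local Notation P := {mpoly K[n]}.
Implicit Types (p q h : P) (M : 'X_{1..n}).

Definition in_box M := [forall i, (M i < d)%N].

(* [box_free d p] says that p lies in the monomial ideal (x_1^d, ..., x_n^d). *)
Definition box_free p := forall M, in_box M -> p@_M = 0.

Lemma box_free0 : box_free 0.
Proof. by move=> M _; rewrite mcoeff0. Qed.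

Lemma box_freeD p q : box_free p -> box_free q -> box_free (p + q).
Proof. by move=> bp bq M M_box; rewrite mcoeffD bp // bq // addr0. Qed.

Lemma box_freeN p : box_free p -> box_free (- p).
Proof. by move=> bp M M_box; rewrite mcoeffN bp // oppr0. Qed.

Lemma box_freeB p q : box_free p -> box_free q -> box_free (p - q).
Proof. by move=> bp bq; apply: box_freeD => //; apply: box_freeN. Qed.

Lemma box_freeMl h p : box_free p -> box_free (h * p).
Proof.
move=> bp M M_box; rewrite mcoeffM big1 // => -[M1 M2] /= /eqP M_eq.
rewrite bp ?mulr0 //; apply/forallP => i; have := forallP M_box i.
have -> : M i = (M1 i + M2 i)%N by rewrite -mnmDE -M_eq.
by apply: leq_ltn_trans; apply: leq_addl.
Qed.

Lemma box_freeMr h p : box_free p -> box_free (p * h).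
Proof. by rewrite mulrC; apply: box_freeMl. Qed.

Lemma box_free_sum (J : Type) (r : seq J) (Pj : pred J) (F : J -> P) :
  (forall j, Pj j -> box_free (F j)) -> box_free (\sum_(j <- r | Pj j) F j).
Proof. by move=> bF; elim/big_ind: _ => //; [apply: box_free0 | apply: box_freeD]. Qed.

Lemma box_freeX m : ~~ in_box m -> box_free 'X_[m].
Proof.
by move=> m_out M M_box; rewrite mcoeffX; case: eqP => // m_eq; rewrite m_eq M_box in m_out.
Qed.

Lemma box_free_varXn c : (0 < d)%N -> (c < n)%N -> box_free (var K n c ^+ d).
Proof.
move=> d_gt0 c_lt; rewrite varE // mpolyXn; apply: box_freeX.
by apply/forallPn; exists (Ordinal c_lt); rewrite mulmnE mnm1nE eqxx mul1n ltnn.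
Qed.

Lemma box_free_in_idealMr gens p G : in_ideal gens p ->
  (forall g, g \in gens -> box_free (g * G)) -> box_free (p * G).
Proof.
move=> [hs [_ ->]] bG; rewrite mulr_suml; apply: box_free_sum => k _.
by rewrite -mulrA; apply: box_freeMl; apply/bG/mem_nth.
Qed.

Lemma box_free_rmorph_in_ideal gens p (f : {rmorphism P -> P}) : in_ideal gens p ->
  (forall g, g \in gens -> box_free (f g)) -> box_free (f p).
Proof.
move=> [hs [_ ->]] bf; rewrite rmorph_sum; apply: box_free_sum => k _.
by rewrite rmorphM; apply: box_freeMl; apply/bf/mem_nth.
Qed.

Definition box_compl M : 'X_{1..n} := [multinom (d.-1 - M i)%N | i < n].

Lemma in_box_compl M : (0 < d)%N -> in_box M -> in_box (box_compl M + M).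
Proof.
by move=> d_gt0 M_box; apply/forallP => i; rewrite mnmDE mnmE; have := forallP M_box i; lia.
Qed.

Lemma mdeg_box_compl M : in_box M -> mdeg (box_compl M) = (n * d.-1 - mdeg M)%N.
Proof.
move=> M_box; have M_le i : (M i <= d.-1)%N by have := forallP M_box i; lia.
have sum_le : (mdeg M <= n * d.-1)%N.
  by rewrite mdegE -[n in (_ <= n * _)%N]card_ord -sum_nat_const leq_sum.
apply/eqP; rewrite -(eqn_add2r (mdeg M)) subnK // -mdegD mdegE.
by rewrite (eq_bigr (fun _ => d.-1)) ?sum_nat_const ?card_ord // => i _; rewrite mnmDE mnmE subnK.
Qed.

End Box.

Section Kill.
Variables (K : fieldType) (n : nat).
Local Notation P := {mpoly K[n]}.
Local Notation var := (var K n).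
Implicit Types (Z : pred nat) (p : P).

Definition kill_tuple Z : n.-tuple P := [tuple if Z i then 0 else 'X_i | i < n].

Definition kill Z p : P := comp_mpoly (kill_tuple Z) p.

HB.instance Definition _ Z := GRing.RMorphism.copy (kill Z) (comp_mpoly (kill_tuple Z)).

Lemma kill_var Z c : (c < n)%N -> kill Z (var c) = if Z c then 0 else var c.
Proof.
move=> c_lt; rewrite -[c]/(val (Ordinal c_lt)) var_ord /kill comp_mpolyXU.
by rewrite -tnth_nth tnth_mktuple.
Qed.

Lemma kill_mpolyX Z m :
  kill Z 'X_[m] = if [forall i : 'I_n, Z i ==> (m i == 0%N)] then 'X_[m] else 0.
Proof.
rewrite /kill comp_mpolyX; case: ifP => [/forallP m_Z | /negbT].
  rewrite mpolyXE_id; apply: eq_bigr => i _; rewrite tnth_mktuple.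
  by case: ifP (m_Z i) => //= _ /eqP ->; rewrite !expr0.
rewrite negb_forall => /existsP [i]; rewrite negb_imply => /andP [Zi mi].
by rewrite (bigD1 i) //= tnth_mktuple Zi expr0n (negbTE mi) mul0r.
Qed.

Lemma mcoeff_kill Z p (M : 'X_{1..n}) :
  (forall i : 'I_n, Z i -> M i = 0%N) -> (kill Z p)@_M = p@_M.
Proof.
move=> M_Z; rewrite [in kill Z p](mpolyE p) [in p@_M](mpolyE p) rmorph_sum !raddf_sum /=.
apply: eq_bigr => m _; rewrite -mul_mpolyC rmorphM /= {1}/kill comp_mpolyC.
rewrite !mul_mpolyC kill_mpolyX !mcoeffZ.
case: (eqVneq m M) => [-> | m_neq].
  by rewrite (_ : [forall i, _] = true) //; apply/forallP => i; apply/implyP => /M_Z ->.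
by rewrite (fun_if (mcoeff M)) mcoeff0 mcoeffX (negbTE m_neq) if_same.
Qed.

Lemma box_free_kill_varXn Z d c : (0 < d)%N -> (c < n)%N ->
  box_free d (kill Z (var c ^+ d)).
Proof.
move=> d_gt0 c_lt; rewrite rmorphXn /= kill_var //.
by case: ifP => _; [rewrite expr0n gtn_eqF //; apply: box_free0 | apply: box_free_varXn].
Qed.

End Kill.

(** * Pairs of variables *)

Lemma sum_nat_split_pairs (V : nmodType) (F : nat -> V) b k :
  \sum_(0 <= i < b + 2 * k) F i =
    \sum_(0 <= i < b) F i + \sum_(j < k) (F (b + 2 * j)%N + F (b + 2 * j).+1).
Proof.
elim: k => [|k IH]; first by rewrite muln0 addn0 big_ord0 addr0.
rewrite big_ord_recr /= !addrA -IH (_ : (b + 2 * k.+1 = (b + 2 * k).+2)%N); last lia.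
by rewrite !big_nat_recr //= leq_addr.
Qed.

Section Pairs.
Variables (K : fieldType) (n : nat).
Local Notation P := {mpoly K[n]}.
Local Notation var := (var K n).
Implicit Types (x y p X : P).

Definition pair_form d x y : P := \sum_(k < d) x ^+ (d.-1 - k) * (- y) ^+ k.

Lemma mul_pair_form d x y : (x + y) * pair_form d x y = x ^+ d - (- y) ^+ d.
Proof. by rewrite subrXX opprK. Qed.

Lemma pair_form_x0 d x : (0 < d)%N -> pair_form d x 0 = x ^+ d.-1.
Proof.
case: d => // d _; rewrite /pair_form big_ord_recl /= subn0 expr0 mulr1 big1 ?addr0 //.
by move=> i _; rewrite oppr0 expr0n mulr0.
Qed.

Lemma rmorph_pair_form (f : {rmorphism P -> P}) d x y :
  f (pair_form d x y) = pair_form d (f x) (f y).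
Proof. by rewrite rmorph_sum; apply: eq_bigr => k _; rewrite rmorphM !rmorphXn rmorphN. Qed.

Lemma pair_form_homog d x y :
  x \is 1.-homog -> y \is 1.-homog -> pair_form d x y \is d.-1.-homog.
Proof.
move=> x_hom y_hom; have Ny_hom : - y \is 1.-homog by rewrite rpredN.
apply: rpred_sum => k _; have := dhomogM (dhomogMn (d.-1 - k) x_hom) (dhomogMn k Ny_hom).
by rewrite !mul1n subnK //; have := ltn_ord k; lia.
Qed.

Lemma mcoeff_pair_form N i j c : (i < n)%N -> (j < n)%N -> i != j -> (c < N)%N ->
  (pair_form N (var i) (var j))@_(mnm1n n i *+ (N.-1 - c) + mnm1n n j *+ c) = (-1) ^+ c.
Proof.
move=> i_lt j_lt ij c_lt.
have term_eq a k : var i ^+ a * (- var j) ^+ k = (-1) ^+ k *: 'X_[mnm1n n i *+ a + mnm1n n j *+ k].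
  rewrite [(- var j) ^+ _]exprNn mulrCA !varE // !mpolyXn -mpolyXD.
  by rewrite -[in LHS]signr_odd -[in RHS]signr_odd scaler_sign mulr_sign.
rewrite raddf_sum (bigD1 (Ordinal c_lt)) //= big1 ?addr0 => [|k k_neq].
  by rewrite term_eq mcoeffZ mcoeffX eqxx mulr1.
rewrite term_eq mcoeffZ mcoeffX.
case: eqP => [/(congr1 (fun M : 'X_{1..n} => M (Ordinal j_lt))) | _]; last by rewrite mulr0.
rewrite !mnmDE !mulmnE !mnm1nE /= eqxx eq_sym (negbTE ij) !mul0n !mul1n !add0n => k_eq.
by move: k_neq; rewrite -val_eqE /= k_eq eqxx.
Qed.

Definition pairs_prod d b k : P :=
  \prod_(j < k) pair_form d (var (b + 2 * j)) (var (b + 2 * j).+1).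

Definition lpart b : P := \sum_(0 <= i < b) var i.

Lemma lpart0 : lpart 0 = 0.
Proof. by rewrite /lpart big_geq. Qed.

Lemma lpartS b : lpart b.+1 = lpart b + var b.
Proof. by rewrite /lpart big_nat_recr. Qed.

Lemma lform_lpart_pairs b k : n = (b + 2 * k)%N ->
  lform K n = lpart b + \sum_(j < k) (var (b + 2 * j) + var (b + 2 * j).+1).
Proof. by move=> n_eq; rewrite lformE /lpart -sum_nat_split_pairs -n_eq. Qed.

Section IdealLike.
Variables (Q : P -> Prop) (d : nat).
Hypotheses (Q0 : Q 0) (QD : forall p q, Q p -> Q q -> Q (p + q)).
Hypotheses (QMl : forall h p, Q p -> Q (h * p)) (Q_varXn : forall c, (c < n)%N -> Q (var c ^+ d)).

Lemma lform_mul_pairs_prod b k X : n = (b + 2 * k)%N ->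
  Q (lpart b * X) -> Q (lform K n * (X * pairs_prod d b k)).
Proof.
move=> n_eq QX; rewrite (lform_lpart_pairs n_eq) mulrDl.
apply: QD; first by rewrite mulrA [_ * pairs_prod _ _ _]mulrC; apply: QMl.
rewrite mulr_suml; apply: (big_ind Q Q0 QD) => j _.
have j_lt : ((b + 2 * j).+1 < n)%N by rewrite n_eq; have := ltn_ord j; lia.
rewrite /pairs_prod (bigD1 j) //=.
set x := var _; set y := var _; set R := \prod_(i < k | i != j) _.
have -> : (x + y) * (X * (pair_form d x y * R)) = X * R * ((x + y) * pair_form d x y) by ring.
apply: QMl; rewrite mul_pair_form exprNn -mulNr.
by apply: QD; [apply: Q_varXn; lia | apply/QMl/Q_varXn].
Qed.

Lemma varXn_mul_closed i j a c : (i < n)%N -> (j < n)%N -> (d <= a)%N || (d <= c)%N ->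
  Q (var i ^+ a * var j ^+ c).
Proof.
move=> i_lt j_lt /orP [] le_d.
  have -> : var i ^+ a * var j ^+ c = var i ^+ (a - d) * var j ^+ c * var i ^+ d.
    by rewrite -{1}(subnK le_d) exprD mulrAC.
  exact/QMl/Q_varXn.
have -> : var i ^+ a * var j ^+ c = var i ^+ a * var j ^+ (c - d) * var j ^+ d.
  by rewrite -{1}(subnK le_d) exprD mulrA.
exact/QMl/Q_varXn.
Qed.

End IdealLike.

Lemma pairs_prod_homog d b k : (b + 2 * k <= n)%N -> pairs_prod d b k \is (k * d.-1).-homog.
Proof.
elim: k => [|k IH] k_le; first by rewrite /pairs_prod big_ord0 dhomog1.
have x_hom : var (b + 2 * k) \is 1.-homog by apply: var_homog; lia.
have y_hom : var (b + 2 * k).+1 \is 1.-homog by apply: var_homog; lia.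
rewrite /pairs_prod big_ord_recr [(k.+1 * _)%N]mulSnr.
by apply: (dhomogM (IH _) (pair_form_homog d x_hom y_hom)); lia.
Qed.

Definition pairs_top d b k : 'X_{1..n} := (\sum_(j < k) mnm1n n (b + 2 * j) *+ d.-1)%MM.

Lemma pairs_topE d b k (i : 'I_n) :
  pairs_top d b k i = ((\sum_(j < k) (i == b + 2 * j :> nat)) * d.-1)%N.
Proof. by rewrite mnm_sumE big_distrl; apply: eq_bigr => j _; rewrite mulmnE mnm1nE. Qed.

Lemma pairs_top_le d b k (i : 'I_n) : (pairs_top d b k i <= d.-1)%N.
Proof.
have hits_le1 : (\sum_(j < k) (i == b + 2 * j :> nat) <= 1)%N.
  elim: k => [|k IH]; first by rewrite big_ord0.
  rewrite big_ord_recr /=; case: eqP => [i_eq|_]; last by rewrite addn0.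
  rewrite big1 // => j _; apply/eqP; rewrite eqb0; apply/eqP; have := ltn_ord j; lia.
by rewrite pairs_topE -[leqRHS]mul1n leq_mul.
Qed.

Lemma pairs_top_out d b k (i : 'I_n) : (i < b)%N || odd (i - b) -> pairs_top d b k i = 0%N.
Proof.
move=> i_out; rewrite pairs_topE big1 // => j _; apply/eqP; rewrite eqb0.
by apply: contraTneq i_out => ->; rewrite ltnNge leq_addr addKn oddM.
Qed.

Lemma mdeg_pairs_top d b k : (b + 2 * k <= n)%N -> mdeg (pairs_top d b k) = (k * d.-1)%N.
Proof.
move=> k_le; rewrite mdeg_sum (eq_bigr (fun _ => d.-1)) ?sum_nat_const ?card_ord // => j _.
by rewrite mdegMn mdeg_mnm1n ?mul1n //; have := ltn_ord j; lia.
Qed.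

Definition pair_kill (Zb : pred nat) b : pred nat :=
  fun i => if (i < b)%N then Zb i else odd (i - b).

Lemma kill_pairs_prod Zb d b k : (0 < d)%N -> (b + 2 * k <= n)%N ->
  kill (pair_kill Zb b) (pairs_prod d b k) = 'X_[pairs_top d b k].
Proof.
move=> d_gt0 k_le; rewrite rmorph_prod /pairs_top; elim/big_rec2: _ => [|j M q _ ->].
  by rewrite mpolyX0.
have j_lt : ((b + 2 * j).+1 < n)%N by have := ltn_ord j; lia.
have [even_kept odd_killed] : ~~ pair_kill Zb b (b + 2 * j)%N /\ pair_kill Zb b (b + 2 * j).+1.
  rewrite /pair_kill ltnNge leq_addr -addnS ltnNge leq_addr /= !addKn /=.
  by rewrite mul2n odd_double.
rewrite mpolyXD rmorph_pair_form /= !kill_var ?(negbTE even_kept) ?odd_killed //; last lia.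
by rewrite pair_form_x0 // varE 1?mpolyXn //; lia.
Qed.

End Pairs.

(** * Two criteria for the failure of the WLP *)

Section Criteria.
Variables (K : fieldType) (n : nat).
Local Notation P := {mpoly K[n]}.
Local Notation var := (var K n).
Implicit Types (e a G : P) (M : 'X_{1..n}).

Lemma powers_plus_varXn d e c : (c < n)%N -> in_ideal (powers_plus d e) (var c ^+ d).
Proof.
move=> c_lt; apply: mem_in_ideal; rewrite mem_cat; apply/orP; left.
by apply/mapP; exists c; rewrite // mem_iota.
Qed.

Lemma powers_plus_extra d e : in_ideal (powers_plus d e) e.
Proof. by apply: mem_in_ideal; rewrite mem_cat mem_seq1 eqxx orbT. Qed.

Lemma all_powers_plus (Q : P -> Prop) d e :
  (forall c, (c < n)%N -> Q (var c ^+ d)) -> Q e -> forall g, g \in powers_plus d e -> Q g.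
Proof.
move=> Q_varXn Qe g; rewrite mem_cat mem_seq1 => /orP [/mapP [c] | /eqP -> //].
by rewrite mem_iota add0n => /andP [_ c_lt] ->; apply: Q_varXn.
Qed.

Lemma in_box_pairs_top d b k M : (0 < d)%N ->
  (forall i : 'I_n, (b <= i)%N -> M i = 0%N) -> in_box d M -> in_box d (pairs_top n d b k + M).
Proof.
move=> d_gt0 M_low M_box; apply/forallP => i; rewrite mnmDE.
case: (ltnP i b) => [i_lt | i_ge]; first by rewrite pairs_top_out ?i_lt // (forallP M_box).
by rewrite M_low // addn0; have := pairs_top_le d b k i; lia.
Qed.

Lemma mcoeff_kill_pairs (Zb : pred nat) b (p : P) M :
  (forall i : 'I_n, Zb i -> M i = 0%N) -> (forall i : 'I_n, (b <= i)%N -> M i = 0%N) ->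
  (kill (pair_kill Zb b) p)@_M = p@_M.
Proof.
move=> M_Zb M_low; apply: mcoeff_kill => i; rewrite /pair_kill.
by case: ltnP => [_ /M_Zb | /M_low].
Qed.

Lemma not_wlp_injective_pairs d e b k s a Zb M : (0 < d)%N -> n = (b + 2 * k)%N ->
  a \is s.-homog -> in_ideal (powers_plus d e) (lpart K n b * a) ->
  box_free d (kill (pair_kill Zb b) e) ->
  (forall i : 'I_n, Zb i -> M i = 0%N) -> (forall i : 'I_n, (b <= i)%N -> M i = 0%N) ->
  in_box d M -> a@_M != 0 ->
  ~ wlp_injective (powers_plus d e) (s + k * d.-1).
Proof.
move=> d_gt0 n_eq a_hom a_in e_killed M_Zb M_low M_box a_coef inj.
have k_le : (b + 2 * k <= n)%N by rewrite n_eq.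
have f_hom : a * pairs_prod K n d b k \is (s + k * d.-1).-homog.
  by apply: dhomogM => //; apply: pairs_prod_homog.
have lf_in : in_ideal (powers_plus d e) (lform K n * (a * pairs_prod K n d b k)).
  apply: (lform_mul_pairs_prod (Q := in_ideal _)) => //.
  - exact: in_ideal0.
  - exact: in_idealD.
  - exact: in_idealMl.
  - exact: powers_plus_varXn.
have f_killed : box_free d (kill (pair_kill Zb b) (a * pairs_prod K n d b k)).
  apply: box_free_rmorph_in_ideal (inj _ f_hom lf_in) _.
  by apply: all_powers_plus => // c c_lt; apply: box_free_kill_varXn.
have := f_killed _ (in_box_pairs_top k d_gt0 M_low M_box).
by rewrite rmorphM /= kill_pairs_prod // mcoeffMX mcoeff_kill_pairs //; apply/eqP.
Qed.

Lemma not_wlp_surjective_pairs d e b k G M i : (0 < d)%N -> n = (b + 2 * k)%N ->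
  box_free d (e * G) -> box_free d (lpart K n b * G) ->
  (forall i : 'I_n, (b <= i)%N -> M i = 0%N) -> in_box d M -> G@_M != 0 ->
  i.+1 = (n * d.-1 - (mdeg M + k * d.-1))%N ->
  ~ wlp_surjective (powers_plus d e) i.
Proof.
move=> d_gt0 n_eq eG_free lG_free M_low M_box G_coef i_eq surj.
have k_le : (b + 2 * k <= n)%N by rewrite n_eq.
set H := G * pairs_prod K n d b k; set T := (pairs_top n d b k + M)%MM.
have T_box : in_box d T by apply: in_box_pairs_top.
have W_hom : ('X_[box_compl d T] : P) \is i.+1.-homog.
  rewrite dhomogX; apply/eqP; change (mdeg (box_compl d T) = i.+1).
  by rewrite mdeg_box_compl // mdegD mdeg_pairs_top // i_eq addnC.
have [f [_ f_diff]] := surj _ W_hom.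
have H_free : box_free d ('X_[box_compl d T] * H : P).
  rewrite -[X in X * H](subrK (lform K n * f)) mulrDl; apply: box_freeD.
    apply: box_free_in_idealMr f_diff _; apply: all_powers_plus => [c c_lt|].
      by apply: box_freeMr; apply: box_free_varXn.
    by rewrite mulrA; apply: box_freeMr.
  rewrite -mulrA mulrCA; apply: box_freeMl.
  apply: (lform_mul_pairs_prod (Q := box_free d)) => //.
  - exact: box_free0.
  - exact: box_freeD.
  - exact: box_freeMl.
  - by move=> c c_lt; apply: box_free_varXn.
have := H_free _ (in_box_compl d_gt0 T_box).
rewrite mulrC mcoeffMX -(mcoeff_kill (Z := pair_kill pred0 b)); last first.
  move=> j; rewrite /pair_kill mnmDE; case: ltnP => // j_ge j_odd.
  by rewrite pairs_top_out ?j_odd ?orbT // M_low.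
rewrite rmorphM /= kill_pairs_prod // mcoeffMX mcoeff_kill_pairs //.
by apply/eqP.
Qed.

End Criteria.

Section Terms.
Variables (K : fieldType) (n : nat).
Local Notation P := {mpoly K[n]}.
Local Notation var := (var K n).
Implicit Types (s : seq nat) (L : seq (int * seq nat)).

Fixpoint monom s i : P := if s is a :: s' then var i ^+ a * monom s' i.+1 else 1.

Fixpoint mexp s i : 'X_{1..n} :=
  if s is a :: s' then (mnm1n n i *+ a + mexp s' i.+1)%MM else 0%MM.

Definition poly_of_terms L : P := \sum_(t <- L) t.1%:~R * monom t.2 0.

Lemma mexpE s i (j : 'I_n) : mexp s i j = if (i <= j)%N then nth 0%N s (j - i) else 0%N.
Proof.
elim: s i => [|a s IH] i /=; first by rewrite mnm0E nth_nil if_same.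
rewrite mnmDE mulmnE mnm1nE IH; case: (ltngtP i j) => [i_lt|//|<-].
  by rewrite mul0n add0n -(subnSK i_lt).
by rewrite subnn mul1n addn0.
Qed.

Lemma monomE s i : (i + size s <= n)%N -> monom s i = 'X_[mexp s i].
Proof.
elim: s i => [|a s IH] i /= size_le; first by rewrite mpolyX0.
by rewrite IH ?mpolyXD -?mpolyXn -?varE //; lia.
Qed.

Lemma mexp0_eq0 s (j : 'I_n) : nth 0%N s j = 0%N -> mexp s 0 j = 0%N.
Proof. by rewrite mexpE subn0. Qed.

Lemma mexp0_out s (j : 'I_n) : (size s <= j)%N -> mexp s 0 j = 0%N.
Proof. by move=> j_ge; apply: mexp0_eq0; rewrite nth_default. Qed.

Lemma eq_mexp0 s s' : size s = size s' -> (size s' <= n)%N ->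
  (mexp s 0 == mexp s' 0) = (s == s').
Proof.
move=> eq_size size_le; apply/eqP/eqP => [eq_mexp|-> //].
apply: (@eq_from_nth _ 0%N) => // j j_lt; have j_lt_n : (j < n)%N by lia.
by have := congr1 (fun M : 'X_{1..n} => M (Ordinal j_lt_n)) eq_mexp; rewrite /= !mexpE !subn0.
Qed.

Lemma mdeg_mexp s i : (i + size s <= n)%N -> mdeg (mexp s i) = sumn s.
Proof.
elim: s i => [|a s IH] i /= size_le; first by rewrite mdeg0.
by rewrite mdegD mdegMn mdeg_mnm1n ?IH ?mul1n //; lia.
Qed.

Lemma in_box_mexp0 d s : (0 < d)%N -> all (fun a => a < d)%N s -> in_box d (mexp s 0).
Proof.
move=> d_gt0 s_lt; apply/forallP => j; rewrite mexpE subn0.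
by case: (ltnP j (size s)) => [j_lt | j_ge]; [apply/(allP s_lt)/mem_nth | rewrite nth_default].
Qed.

Lemma mcoeff_poly_of_terms L s : (size s <= n)%N -> all (fun t => size t.2 == size s) L ->
  (poly_of_terms L)@_(mexp s 0) = (\sum_(t <- L | t.2 == s) t.1)%:~R.
Proof.
move=> size_le; elim: L => [|t L IH]; first by rewrite /poly_of_terms !big_nil mcoeff0.
rewrite /= => /andP [/eqP size_t /IH {}IH].
rewrite /poly_of_terms !big_cons mcoeffD -/(poly_of_terms L) IH.
rewrite monomE ?size_t // mulrzl raddfMz /= mcoeffX eq_mexp0 //.
by case: eqP => _; rewrite ?intrD ?mul0rz ?add0r.
Qed.

Lemma poly_of_terms_homog L k w : (w <= n)%N ->
  all (fun t => (size t.2 == w) && (sumn t.2 == k)) L -> poly_of_terms L \is k.-homog.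
Proof.
move=> w_le; elim: L => [|t L IH]; first by rewrite /poly_of_terms big_nil dhomog0.
rewrite /= => /andP [/andP [/eqP size_t /eqP sum_t] /IH {}IH].
rewrite /poly_of_terms big_cons rpredD // monomE ?size_t // mulrzl rpredMz // dhomogX.
by apply/eqP; change (mdeg (mexp t.2 0) = k); rewrite mdeg_mexp ?size_t.
Qed.

End Terms.

Section VandermondeIdentities.
Variable R : comNzRingType.
Implicit Types x y z w : R.

Definition vdm3 x y z : R := (x - y) * (x - z) * (y - z).

Definition vdm4 x y z w : R := (x - y) * (x - z) * (x - w) * vdm3 y z w.

Lemma sum_mul_vdm3 x y z :
  (x + y + z) * vdm3 x y z = x ^+ 3 * (y - z) + y ^+ 3 * (z - x) + z ^+ 3 * (x - y).
Proof. by rewrite /vdm3; ring. Qed.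

Lemma prod_mul_vdm3 x y z : x * y * z * vdm3 x y z =
  x ^+ 3 * (y * z * (y - z)) + y ^+ 3 * (z * x * (z - x)) + z ^+ 3 * (x * y * (x - y)).
Proof. by rewrite /vdm3; ring. Qed.

Lemma sum_mul_vdm4 x y z w : (x + y + z + w) * vdm4 x y z w =
  x ^+ 4 * vdm3 y z w - y ^+ 4 * vdm3 x z w + z ^+ 4 * vdm3 x y w - w ^+ 4 * vdm3 x y z.
Proof. by rewrite /vdm4 /vdm3; ring. Qed.

Lemma prod_mul_vdm4 x y z w : x * y * z * w * vdm4 x y z w =
  x ^+ 4 * (y * z * w * vdm3 y z w) - y ^+ 4 * (x * z * w * vdm3 x z w)
  + z ^+ 4 * (x * y * w * vdm3 x y w) - w ^+ 4 * (x * y * z * vdm3 x y z).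
Proof. by rewrite /vdm4 /vdm3; ring. Qed.

Lemma sum_mul_e2_sub_p2 x y z :
  (x + y + z) * (x * y + x * z + y * z - x ^+ 2 - y ^+ 2 - z ^+ 2) =
    3 * (x * y * z) - (x ^+ 3 + y ^+ 3 + z ^+ 3).
Proof. by ring. Qed.

End VandermondeIdentities.

(** * The three families *)

Section Case1.
Variables (K : fieldType) (n d : nat).
Hypotheses (d_ge5 : (5 <= d)%N) (n_ge4 : (4 <= n)%N).
Local Notation var := (var K n).
Local Notation I := (in_ideal (powers_plus d (var 0 ^+ 3 * var 1 ^+ (d - 3)))).
Local Notation N := (2 * d - 3)%N.

Lemma in_ideal_case1_expD01 : I ((var 0 + var 1) ^+ N).
Proof.
rewrite exprDn; apply: in_ideal_sum => i _; apply: in_idealMn; have := ltn_ord i => i_le.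
have [out|] := boolP ((d <= N - i)%N || (d <= i)%N).
  by apply: (varXn_mul_closed (@in_idealMl _ _ _) (powers_plus_varXn d _)) => //; lia.
rewrite negb_or -!ltnNge => /andP [lt1 lt2].
have -> : var 0 ^+ (N - i) * var 1 ^+ i =
    var 0 ^+ (N - i - 3) * var 1 ^+ (i - (d - 3)) * (var 0 ^+ 3 * var 1 ^+ (d - 3)).
  rewrite -{1}(@subnK 3 (N - i)) -1?{2}(@subnK (d - 3) i); try lia.
  by rewrite (exprD (var 0)) (exprD (var 1)) mulrACA.
by apply: in_idealMl; apply: powers_plus_extra.
Qed.

(* The two middle monomials x2^(d-1) x3^(d-1) cancel since 'C(N, d - 1) = 'C(N, d - 2). *)
Lemma in_ideal_case1_subr_expD23 : I ((var 2 - var 3) * (var 2 + var 3) ^+ N).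
Proof.
set T1 := fun i : 'I_N.+1 => (var 2 ^+ (N.+1 - i) * var 3 ^+ i) *+ 'C(N, i).
set T2 := fun i : 'I_N.+1 => (var 2 ^+ (N - i) * var 3 ^+ i.+1) *+ 'C(N, i).
have -> : (var 2 - var 3) * (var 2 + var 3) ^+ N = \sum_i T1 i - \sum_i T2 i.
  rewrite exprDn mulrBl !mulr_sumr; congr (_ - _); apply: eq_bigr => i _.
    by rewrite /T1 mulrnAr mulrA -exprS subSn //; have := ltn_ord i; lia.
  by rewrite /T2 mulrnAr mulrCA -exprS.
have mid1 : (d.-1 < N.+1)%N by lia.
have mid2 : (d - 2 < N.+1)%N by lia.
rewrite (bigD1 (Ordinal mid1)) // [\sum_i T2 i](bigD1 (Ordinal mid2)) //=.
have -> : T1 (Ordinal mid1) = T2 (Ordinal mid2).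
  rewrite /T1 /T2 /=.
  have [-> -> ->] : [/\ (N.+1 - d.-1 = d.-1)%N, (N - (d - 2) = d.-1)%N & (d - 2).+1 = d.-1].
    by split; lia.
  rewrite -bin_sub; last lia.
  by rewrite (_ : (N - d.-1 = d - 2)%N) //; lia.
rewrite opprD addrACA subrr add0r.
apply: in_idealB; apply: in_ideal_sum => i; rewrite -val_eqE /= => i_neq; apply: in_idealMn;
  by apply: (varXn_mul_closed (@in_idealMl _ _ _) (powers_plus_varXn d _)) => //;
    have := ltn_ord i; lia.
Qed.

Lemma case1_not_surjective m : n = (2 * m)%N ->
  ~ wlp_surjective (powers_plus d (var 0 ^+ 3 * var 1 ^+ (d - 3))) (m * (d - 1) - 1).
Proof.
move=> n_eq; have d_gt0 : (0 < d)%N by lia.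
apply: (not_wlp_surjective_pairs (b := 2) (k := m.-1) (G := pair_form d (var 0) (var 1))
  (M := mnm1n n 0 *+ d.-1) d_gt0); first lia.
- rewrite mulr_sumr; apply: box_free_sum => k _.
  have -> : var 0 ^+ 3 * var 1 ^+ (d - 3) * (var 0 ^+ (d.-1 - k) * (- var 1) ^+ k) =
      (-1) ^+ k * (var 0 ^+ (3 + (d.-1 - k)) * var 1 ^+ (d - 3 + k)).
    by rewrite [(- var 1) ^+ _]exprNn !exprD; ring.
  apply: box_freeMl.
  apply: (varXn_mul_closed (@box_freeMl _ _ _) (fun c c_lt => box_free_varXn K d_gt0 c_lt)) => //;
    have := ltn_ord k; lia.
- rewrite !lpartS lpart0 add0r mul_pair_form.
  by apply: box_freeB; [| rewrite exprNn; apply: box_freeMl]; apply: box_free_varXn => //; lia.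
- by move=> i i_ge; rewrite mulmnE mnm1nE; case: eqP => // i_eq; rewrite i_eq in i_ge.
- by apply/forallP => i; rewrite mulmnE mnm1nE; case: eqP => _; lia.
- rewrite -(mcoeff_kill (Z := pred1 1%N)) => [|i /eqP i_eq]; last by rewrite mulmnE mnm1nE i_eq.
  rewrite rmorph_pair_form /= !kill_var //=; try lia.
  by rewrite pair_form_x0 // varE ?mpolyXn ?mcoeffX ?eqxx ?oner_neq0 //; lia.
- by rewrite mdegMn mdeg_mnm1n ?mul1n ?n_eq; [nia | lia].
Qed.

Lemma case1_not_injective m : n = (2 * m)%N ->
  ~ wlp_injective (powers_plus d (var 0 ^+ 3 * var 1 ^+ (d - 3))) (m * (d - 1) - 1).
Proof.
move=> n_eq; have d_gt0 : (0 < d)%N by lia.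
have -> : (m * (d - 1) - 1 = N + (m - 2) * d.-1)%N by nia.
have var_hom c : (c < 4)%N -> var c \is 1.-homog by move=> c_lt; apply: var_homog; lia.
pose Zb : pred nat := fun i => (i == 0)%N || (i == 3)%N.
pose M := (mnm1n n 1 *+ d.-1 + mnm1n n 2 *+ (d - 2))%MM.
have M_Zb (i : 'I_n) : Zb i -> M i = 0%N.
  by rewrite mnmDE !mulmnE !mnm1nE => /orP [] /eqP ->.
apply: (not_wlp_injective_pairs (b := 4) (k := m - 2)
  (a := (var 2 - var 3) * pair_form N (var 0 + var 1) (var 2 + var 3)) (Zb := Zb) (M := M) d_gt0).
- lia.
- have := dhomogM (rpredB (var_hom 2 isT) (var_hom 3 isT)) (pair_form_homog N
    (rpredD (var_hom 0 isT) (var_hom 1 isT)) (rpredD (var_hom 2 isT) (var_hom 3 isT))).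
  by rewrite add1n prednK //; lia.
- rewrite !lpartS lpart0 add0r.
  set f := pair_form N _ _.
  have -> : (var 0 + var 1 + var 2 + var 3) * ((var 2 - var 3) * f) =
      (var 2 - var 3) * ((var 0 + var 1 + (var 2 + var 3)) * f) by ring.
  rewrite mul_pair_form mulrBr; apply: in_idealB; first by apply/in_idealMl/in_ideal_case1_expD01.
  by rewrite exprNn mulrCA; apply/in_idealMl/in_ideal_case1_subr_expD23.
- rewrite rmorphM rmorphXn /= kill_var; last lia.
  by rewrite /pair_kill /Zb /= expr0n mul0r; apply: box_free0.
- exact: M_Zb.
- move=> i i_ge; rewrite mnmDE !mulmnE !mnm1nE.
  by do 2 (case: eqP => [i_eq|_]; first by rewrite i_eq in i_ge).
- apply/forallP => i; rewrite mnmDE !mulmnE !mnm1nE.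
  by case: eqP => [->|_]; case: eqP => //= _; lia.
- rewrite -(mcoeff_kill _ M_Zb) rmorphM rmorphB rmorph_pair_form /= !rmorphD /= !kill_var //;
    try lia.
  rewrite /= subr0 add0r addr0 mulrC {2}(@varE _ _ 2); last lia.
  have -> : M = (mnm1n n 2 + (mnm1n n 1 *+ (N.-1 - (d - 3)) + mnm1n n 2 *+ (d - 3)))%MM.
    by apply/mnmP => i; rewrite !mnmDE !mulmnE !mnm1nE; case: eqP; case: eqP; lia.
  by rewrite mcoeffMX mcoeff_pair_form ?signr_eq0 //; lia.
Qed.

End Case1.

Section Case2.
Variables (K : fieldType) (n : nat).
Hypothesis n_ge4 : (4 <= n)%N.
Local Notation var := (var K n).
Local Notation e := (var 0 * var 1 * var 2 * var 3).
Local Notation I := (in_ideal (powers_plus 4 e)).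

Definition case2_witness : seq (int * seq nat) := [::
  (3, [:: 0; 0; 2; 3]); (-3, [:: 0; 0; 3; 2]); (-4, [:: 0; 1; 1; 3]); (1, [:: 0; 1; 2; 2]);
  (2, [:: 0; 1; 3; 1]); (3, [:: 0; 2; 0; 3]); (1, [:: 0; 2; 1; 2]); (-2, [:: 0; 2; 2; 1]);
  (-3, [:: 0; 3; 0; 2]); (2, [:: 0; 3; 1; 1]); (-4, [:: 1; 0; 1; 3]); (1, [:: 1; 0; 2; 2]);
  (2, [:: 1; 0; 3; 1]); (-4, [:: 1; 1; 0; 3]); (1, [:: 1; 2; 0; 2]); (2, [:: 1; 3; 0; 1]);
  (3, [:: 2; 0; 0; 3]); (1, [:: 2; 0; 1; 2]); (-2, [:: 2; 0; 2; 1]); (1, [:: 2; 1; 0; 2]);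
  (-2, [:: 2; 2; 0; 1]); (-3, [:: 3; 0; 0; 2]); (2, [:: 3; 0; 1; 1]); (2, [:: 3; 1; 0; 1])].

Lemma lpart4_mul_case2_witness : lpart K n 4 * poly_of_terms K n case2_witness =
    (2 * var 1 * var 3 + 2 * var 2 * var 3 - 3 * var 3 ^+ 2) * var 0 ^+ 4
  + (2 * var 0 * var 3 + 2 * var 2 * var 3 - 3 * var 3 ^+ 2) * var 1 ^+ 4
  + (2 * var 0 * var 3 + 2 * var 1 * var 3 - 3 * var 3 ^+ 2) * var 2 ^+ 4
  + (3 * var 0 ^+ 2 - 4 * var 0 * var 1 - 4 * var 0 * var 2 + 3 * var 1 ^+ 2
      - 4 * var 1 * var 2 + 3 * var 2 ^+ 2) * var 3 ^+ 4
  + (4 * var 0 ^+ 2 - 2 * var 0 * var 1 - 2 * var 0 * var 2 + 2 * var 0 * var 3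
      + 4 * var 1 ^+ 2 - 2 * var 1 * var 2 + 2 * var 1 * var 3 + 4 * var 2 ^+ 2
      + 2 * var 2 * var 3 - 12 * var 3 ^+ 2) * e.
Proof. by rewrite !lpartS lpart0 /poly_of_terms !big_cons big_nil /=; ring. Qed.

Lemma case2_not_injective m : n = (2 * m)%N ->
  ~ wlp_injective (powers_plus 4 e) (m * (4 - 1) - 1).
Proof.
move=> n_eq; have -> : (m * (4 - 1) - 1 = 5 + (m - 2) * 4.-1)%N by lia.
apply: (not_wlp_injective_pairs (b := 4) (k := m - 2) (a := poly_of_terms K n case2_witness)
  (Zb := pred1 0%N) (M := mexp n [:: 0; 1; 2; 2] 0) (isT : (0 < 4)%N)).
- lia.
- exact: poly_of_terms_homog n_ge4 _.
- rewrite lpart4_mul_case2_witness.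
  repeat apply: in_idealD; try by apply: in_idealMl; apply: powers_plus_varXn; lia.
  exact/in_idealMl/powers_plus_extra.
- rewrite !rmorphM /= kill_var; last lia.
  by rewrite /= !mul0r; apply: box_free0.
- by move=> i /eqP i0; apply: mexp0_eq0; rewrite i0.
- by move=> i i_ge; apply: mexp0_out.
- exact: in_box_mexp0.
- by rewrite mcoeff_poly_of_terms //= unlock /= addr0 oner_neq0.
Qed.

Lemma case2_not_surjective m : n = (2 * m)%N ->
  ~ wlp_surjective (powers_plus 4 e) (m * (4 - 1) - 1).
Proof.
move=> n_eq.
have varX4_free c : (c < n)%N -> box_free 4 (var c ^+ 4) by apply: box_free_varXn.
apply: (not_wlp_surjective_pairs (b := 4) (k := m - 2)
  (G := vdm4 (var 0) (var 1) (var 2) (var 3)) (M := mexp n [:: 0; 1; 2; 3] 0) (isT : (0 < 4)%N)).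
- lia.
- rewrite prod_mul_vdm4.
  by repeat apply: box_freeD; try apply: box_freeN; rewrite mulrC; apply/box_freeMl/varX4_free; lia.
- rewrite !lpartS lpart0 add0r sum_mul_vdm4.
  by repeat apply: box_freeD; try apply: box_freeN; rewrite mulrC; apply/box_freeMl/varX4_free; lia.
- by move=> i i_ge; apply: mexp0_out.
- exact: in_box_mexp0.
- rewrite -(mcoeff_kill (Z := pred1 0%N)) => [|i /eqP i0]; last by apply: mexp0_eq0; rewrite i0.
  have -> : kill (pred1 0%N) (vdm4 (var 0) (var 1) (var 2) (var 3)) = poly_of_terms K n
      [:: (1, [:: 0; 1; 2; 3]); (-1, [:: 0; 1; 3; 2]); (-1, [:: 0; 2; 1; 3]);
          (1, [:: 0; 2; 3; 1]); (1, [:: 0; 3; 1; 2]); (-1, [:: 0; 3; 2; 1])].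
    rewrite /vdm4 /vdm3 !rmorphM !rmorphB /= !kill_var /=; try lia.
    by rewrite /poly_of_terms !big_cons big_nil /=; ring.
  by rewrite mcoeff_poly_of_terms //= unlock /= addr0 oner_neq0.
- rewrite mdeg_mexp //=; lia.
Qed.

End Case2.

Section Case3.
Variables (K : fieldType) (n : nat).
Hypothesis n_ge6 : (6 <= n)%N.
Local Notation P := {mpoly K[n]}.
Local Notation var := (var K n).
Local Notation e := (var 0 * var 1 * var 2).
Local Notation VA := (vdm3 (var 0) (var 1) (var 2)).
Local Notation VB := (vdm3 (var 3) (var 4) (var 5)).
Local Notation q := (var 0 * var 1 + var 0 * var 2 + var 1 * var 2
  - var 0 ^+ 2 - var 1 ^+ 2 - var 2 ^+ 2).

Lemma lpart6E : lpart K n 6 = (var 0 + var 1 + var 2) + (var 3 + var 4 + var 5).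
Proof. by rewrite !lpartS lpart0 add0r !addrA. Qed.

Lemma case3_not_injective m : n = (2 * m)%N ->
  ~ wlp_injective (powers_plus 3 e) (m * (3 - 1) - 1).
Proof.
move=> n_eq; have -> : (m * (3 - 1) - 1 = 5 + (m - 3) * 3.-1)%N by lia.
have var_hom c : (c < 6)%N -> var c \is 1.-homog by move=> c_lt; apply: var_homog; lia.
have varX3_in c : (c < n)%N -> in_ideal (powers_plus 3 e) (var c ^+ 3) by apply: powers_plus_varXn.
pose Zb : pred nat := fun i => [|| i == 1, i == 2 | i == 4]%N.
pose M := mexp n [:: 2; 0; 0; 2; 0; 1] 0.
have M_Zb (i : 'I_n) : Zb i -> M i = 0%N.
  by move=> Zi; apply: mexp0_eq0; case/or3P: Zi => /eqP ->.
apply: (not_wlp_injective_pairs (b := 6) (k := m - 3) (a := q * VB) (Zb := Zb) (M := M)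
  (isT : (0 < 3)%N)).
- lia.
- have diff_hom i j : (i < 6)%N -> (j < 6)%N -> var i - var j \is 1.-homog.
    by move=> i_lt j_lt; rewrite rpredB ?var_hom.
  have mul_hom i j : (i < 6)%N -> (j < 6)%N -> var i * var j \is 2.-homog.
    by move=> i_lt j_lt; apply: (dhomogM (var_hom i i_lt) (var_hom j j_lt)).
  have q_hom : q \is 2.-homog by rewrite !rpredB ?rpredD ?expr2 ?mul_hom.
  exact: (dhomogM q_hom (dhomogM (dhomogM (diff_hom 3 4 isT isT) (diff_hom 3 5 isT isT))
    (diff_hom 4 5 isT isT))).
- have -> : lpart K n 6 * (q * VB) =
      (var 0 + var 1 + var 2) * q * VB + q * ((var 3 + var 4 + var 5) * VB).
    by rewrite lpart6E; ring.
  rewrite sum_mul_e2_sub_p2 sum_mul_vdm3.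
  apply: in_idealD; [apply: in_idealMr | apply: in_idealMl].
    apply: in_idealB; first by apply/in_idealMl/powers_plus_extra.
    by do 2 (apply: in_idealD; last by apply: varX3_in; lia); apply: varX3_in; lia.
  by do 2 (apply: in_idealD; last by apply: in_idealMr; apply: varX3_in; lia);
    apply: in_idealMr; apply: varX3_in; lia.
- rewrite !rmorphM /= [kill _ (var 2)]kill_var; last lia.
  by rewrite /pair_kill /Zb /= mulr0; apply: box_free0.
- exact: M_Zb.
- by move=> i i_ge; apply: mexp0_out.
- exact: in_box_mexp0.
- rewrite -(mcoeff_kill _ M_Zb).
  have -> : kill Zb (q * VB) = poly_of_terms K n
      [:: (1, [:: 2; 0; 0; 2; 0; 1]); (-1, [:: 2; 0; 0; 1; 0; 2])].
    rewrite /vdm3 !rmorphM !rmorphB !rmorphD !rmorphXn !rmorphM /= !kill_var /Zb /=; try lia.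
    by rewrite /poly_of_terms !big_cons big_nil /=; ring.
  by rewrite mcoeff_poly_of_terms //= unlock /= addr0 oner_neq0.
Qed.

Lemma case3_not_surjective m : n = (2 * m)%N ->
  ~ wlp_surjective (powers_plus 3 e) (m * (3 - 1) - 1).
Proof.
move=> n_eq.
have varX3_free c : (c < n)%N -> box_free 3 (var c ^+ 3) by apply: box_free_varXn.
have cubes_free x y z : [/\ x < n, y < n & z < n]%N -> forall f g h : P,
    box_free 3 (var x ^+ 3 * f + var y ^+ 3 * g + var z ^+ 3 * h).
  move=> [x_lt y_lt z_lt] f g h.
  by do 2?apply: box_freeD; rewrite mulrC; apply: box_freeMl; apply: varX3_free.
apply: (not_wlp_surjective_pairs (b := 6) (k := m - 3) (G := VA * VB)
  (M := mexp n [:: 2; 1; 0; 2; 1; 0] 0) (isT : (0 < 3)%N)).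
- lia.
- by rewrite mulrA prod_mul_vdm3; apply: box_freeMr; apply: cubes_free; split; lia.
- have -> : lpart K n 6 * (VA * VB) =
      (var 0 + var 1 + var 2) * VA * VB + VA * ((var 3 + var 4 + var 5) * VB).
    by rewrite lpart6E; ring.
  rewrite !sum_mul_vdm3; apply: box_freeD; [apply: box_freeMr | apply: box_freeMl];
    by apply: cubes_free; split; lia.
- by move=> i i_ge; apply: mexp0_out.
- exact: in_box_mexp0.
- rewrite -(mcoeff_kill (Z := pred2 2 5)%N) => [|i Zi]; last first.
    by apply: mexp0_eq0; case/pred2P: Zi => ->.
  have -> : kill (pred2 2 5)%N (VA * VB) = poly_of_terms K n
      [:: (1, [:: 2; 1; 0; 2; 1; 0]); (-1, [:: 2; 1; 0; 1; 2; 0]);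
          (-1, [:: 1; 2; 0; 2; 1; 0]); (1, [:: 1; 2; 0; 1; 2; 0])].
    rewrite /vdm3 !rmorphM !rmorphB /= !kill_var /=; try lia.
    by rewrite /poly_of_terms !big_cons big_nil /=; ring.
  by rewrite mcoeff_poly_of_terms //= unlock /= !addr0 oner_neq0.
- by rewrite mdeg_mexp //=; lia.
Qed.

End Case3.

Theorem proposition5p6 (K : fieldType) (hK : [pchar K] =i pred0)
  (m n d : nat) (hn : n = (2 * m)%N) :
  [/\ (5 <= d)%N -> (4 <= n)%N ->
        fails_WLP_in_degree
          (powers_plus d (var K n 0 ^+ 3 * var K n 1 ^+ (d - 3)))
          (m * (d - 1) - 1)%N,
      d = 4%N -> (4 <= n)%N ->
        fails_WLP_in_degree
          (powers_plus d (var K n 0 * var K n 1 * var K n 2 * var K n 3))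
          (m * (d - 1) - 1)%N
    & d = 3%N -> (6 <= n)%N ->
        fails_WLP_in_degree
          (powers_plus d (var K n 0 * var K n 1 * var K n 2))
          (m * (d - 1) - 1)%N].
Proof.
(* The coefficients read off in the criteria are +-1, so [hK] is not needed. *)
split=> [d_ge5 n_ge4 | -> n_ge4 | -> n_ge6].
- by split; [apply: case1_not_injective | apply: case1_not_surjective].
- by split; [apply: case2_not_injective | apply: case2_not_surjective].
- by split; [apply: case3_not_injective | apply: case3_not_surjective].
Qed.
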